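(* For all positive integers $k,q,m$ with $q<k$ one has $\alpha^k_{q,m}=0$; that is, every M-partition of type $(k,q,m)$ satisfies $q\geqslant k$.
   Context: Let $\mathbb N=\mathbb Z_{\geqslant 0}$ with the componentwise order. For integers $n,d\geqslant 0$, an $(n-1)$-dimensional partition of size $d$ is a subset $\lambda\subset\mathbb N^n$ with $|\lambda|=d$ closed downward for the componentwise order; $\mathrm P^n_d$ is the set of these. The degree of a point is the sum of its coordinates; $\lambda_{=i}$, $\lambda_{\geqslant i}$ are the elements of degree $i$, resp. $\geqslant i$; $h_\lambda(i)=|\lambda_{=i}|$; $\mathrm{Soc}(\lambda)$ is the set of maximal elements of $\lambda$. For positive integers $k,q,m$, an M-partition of type $(k,q,m)$ is a $\lambda\in\mathrm P^k_{1+k+q+m}$ with $\mathrm{Soc}(\lambda)\subset\lambda_{\geqslant 3}$, $h_\lambda(1)=k$, $h_\lambda(2)=q$ and $\sum_{i\geqslant 3}h_\lambda(i)=m$. $\alpha^k_{q,m}$ denotes the number of M-partitions of type $(k,q,m)$. *)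

From mathcomp Require Import all_boot finmap.
Set Implicit Arguments. Unset Strict Implicit. Unset Printing Implicit Defensive.
Local Open Scope fset_scope.

Definition pt (n : nat) := {ffun 'I_n -> nat}.

Definition ple (n : nat) (x y : pt n) : bool := [forall i, x i <= y i].

Definition deg (n : nat) (x : pt n) : nat := \sum_(i < n) x i.

(* an (n-1)-dimensional partition of size d: a finite downward-closed subset of N^n
   of cardinality d *)
Definition is_partition (n d : nat) (lam : {fset pt n}) : Prop :=
  #|` lam| = d /\ (forall x y : pt n, y \in lam -> ple x y -> x \in lam).

Definition lam_eq (n : nat) (lam : {fset pt n}) (i : nat) : {fset pt n} :=
  [fset x in lam | deg x == i].
Definition lam_ge (n : nat) (lam : {fset pt n}) (i : nat) : {fset pt n} :=
  [fset x in lam | i <= deg x].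
Definition h (n : nat) (lam : {fset pt n}) (i : nat) : nat := #|` lam_eq lam i|.

Definition socle (n : nat) (lam : {fset pt n}) : {fset pt n} :=
  [fset x in lam | [forall y : lam, ple x (val y) ==> (val y == x)]].

(* M-partition of type (k,q,m).  The sum \sum_{i>=3} h_lambda(i) (a finite sum,
   since lambda is finite) equals #|lambda_{>=3}|. *)
Definition is_M_partition (k q m : nat) (lam : {fset pt k}) : Prop :=
  [/\ is_partition (1 + k + q + m) lam,
      socle lam `<=` lam_ge lam 3,
      h lam 1 = k,
      h lam 2 = q &
      #|` lam_ge lam 3| = m].
Arguments is_M_partition k q m lam : clear implicits.

From mathcomp Require Import all_boot finmap zify.
Set Implicit Arguments. Unset Strict Implicit. Unset Printing Implicit Defensive.
Local Open Scope fset_scope. Local Open Scope nat_scope.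

(** Write [e_i] for the unit vectors and call [i ~ j] when [e_i + e_j] lies in
   [lam].  All [k] unit vectors lie in [lam], and since the socle sits in degree
   at least 3, every element of degree at most 2 lies strictly below another
   element of [lam].  Hence every [i] has a neighbour, and every edge
   [i ~ j] extends to some [e_i + e_j + e_l] in [lam], giving [i ~ l] and
   [j ~ l].  Choosing for each [i] its first neighbour in the cyclic order
   [i, i+1, ..., i-1] yields a map [i |-> e_i + e_(g i)] into the degree-2
   layer which is injective: a collision [g i = j], [g j = i] with [i <> j]
   is ruled out by the extension [l] of [i ~ j], which would come before [j]
   in the cyclic order from [i] or before [i] in the one from [j].  So
   [q = h 2 >= k]. *)

(* Rank of [j] in the cyclic order starting at [i]. *)
Definition cyc_pos k (i j : 'I_k) : nat := if j < i then j + k else j.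

Lemma cyc_pos_no_2cycle k (i j l : 'I_k) : i != j ->
  cyc_pos i j <= cyc_pos i l -> cyc_pos j i <= cyc_pos j l -> False.
Proof.
rewrite -val_eqE /cyc_pos => /= ij.
have := ltn_ord i; have := ltn_ord j; have := ltn_ord l.
case: ifP => H1; case: ifP => H2; case: ifP => H3; case: ifP => H4; lia.
Qed.

Section ChoiceWithout2Cycles.

Variables (k : nat) (N : rel 'I_k).
Hypothesis N_total : forall i, exists j, N i j.
Hypothesis N_extend : forall i j, N i j -> exists l, N i l && N j l.

Lemma first_neighbour i :
  exists j, N i j /\ forall l, N i l -> cyc_pos i j <= cyc_pos i l.
Proof.
have [j0 Nij0] := N_total i.
by case: (arg_minnP (cyc_pos i) Nij0) => j Nij j_min; exists j.
Qed.

Lemma choice_without_2cycles :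
  exists g : 'I_k -> 'I_k,
    (forall i, N i (g i)) /\ (forall i j, g i = j -> g j = i -> i = j).
Proof.
have [g g_first] := fin_all_exists first_neighbour.
exists g; split=> [i | i j gi gj]; first by case: (g_first i).
case: (eqVneq i j) => // ij; exfalso.
have [Nij min_i] := g_first i; have [_ min_j] := g_first j.
rewrite gi in Nij min_i; rewrite gj in min_j.
have [l /andP [Nil Njl]] := N_extend Nij.
exact: cyc_pos_no_2cycle ij (min_i l Nil) (min_j l Njl).
Qed.

End ChoiceWithout2Cycles.

Definition unit_pt k (i : 'I_k) : pt k := [ffun t => nat_of_bool (t == i)].
Definition incr_pt k (x : pt k) (l : 'I_k) : pt k := [ffun t => x t + (t == l)].
Definition pair_pt k (i j : 'I_k) : pt k := incr_pt (unit_pt i) j.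

Lemma sum_delta k (l : 'I_k) : \sum_(t < k) nat_of_bool (t == l) = 1.
Proof. by rewrite (bigD1 l) //= eqxx big1 // => t /negbTE ->. Qed.

Lemma deg_unit_pt k (i : 'I_k) : deg (unit_pt i) = 1.
Proof. rewrite /deg; under eq_bigr do rewrite ffunE; exact: sum_delta. Qed.

Lemma deg_incr_pt k (x : pt k) l : deg (incr_pt x l) = (deg x).+1.
Proof.
rewrite /deg; under eq_bigr do rewrite ffunE.
by rewrite big_split /= sum_delta addn1.
Qed.

Lemma deg_pair_pt k (i j : 'I_k) : deg (pair_pt i j) = 2.
Proof. by rewrite deg_incr_pt deg_unit_pt. Qed.

Lemma deg_eq1P k (x : pt k) : deg x = 1 -> exists i, x = unit_pt i.
Proof.
move=> /eqP /sum_nat_eq1 [i [_ xi1 x0]]; exists i.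
apply/ffunP => t; rewrite ffunE.
by case: eqVneq => [-> | /x0 ->].
Qed.

Lemma pair_ptC k (i j : 'I_k) : pair_pt i j = pair_pt j i.
Proof. by apply/ffunP => t; rewrite !ffunE addnC. Qed.

Lemma pair_pt_inj k (i j a b : 'I_k) : pair_pt i a = pair_pt j b -> i != j -> a = j.
Proof.
move=> /ffunP /(_ j); rewrite !ffunE eqxx eq_sym => + /negbTE ji.
rewrite ji; case: eqVneq => // ja; case: eqVneq => //=.
Qed.

Lemma ple_pair_incr k (i j l : 'I_k) : ple (pair_pt i l) (incr_pt (pair_pt i j) l).
Proof. apply/forallP => t; rewrite !ffunE; lia. Qed.

Lemma incr_ple k (x y : pt k) : ple x y -> x != y -> exists l, ple (incr_pt x l) y.
Proof.
move=> /forallP xy neq.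
have [l xl] : exists l, x l < y l.
  apply/existsP; apply: contraNT neq; rewrite negb_exists => /forallP yx.
  by apply/eqP/ffunP => t; apply/eqP; rewrite eqn_leq xy leqNgt yx.
exists l; apply/forallP => t; rewrite ffunE.
by case: eqVneq => [-> | _]; rewrite ?addn1 ?addn0.
Qed.

Lemma leq_card_fset_inj (T : choiceType) (I : finType) (f : I -> T) (A : {fset T}) :
  injective f -> (forall i, f i \in A) -> #|I| <= #|` A|.
Proof.
move=> f_inj fA; rewrite cardE -(size_map f).
apply: uniq_leq_size; first by rewrite map_inj_uniq ?enum_uniq.
by move=> _ /mapP [i _ ->]; exact: fA.
Qed.

Section LowDegreeLayers.

Variables (k : nat) (lam : {fset pt k}).
Hypothesis lam_down : forall x y : pt k, y \in lam -> ple x y -> x \in lam.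
Hypothesis socle_deg_ge3 : socle lam `<=` lam_ge lam 3.

Lemma unit_pt_in : h lam 1 = k -> forall i, unit_pt i \in lam.
Proof.
move=> h1 i; pose P := [pred j : 'I_k | unit_pt j \in lam].
have k_le_P : k <= #|P|.
  rewrite -[X in X <= _]h1 -(size_image (@unit_pt k) P).
  apply: uniq_leq_size (fset_uniq _) _ => x.
  rewrite !inE /= => /andP [x_lam /eqP /deg_eq1P [j xj]]; subst x.
  exact: image_f.
have card_P : #|P| = #|'I_k| by apply/eqP; rewrite eqn_leq max_card card_ord.
by move/(subset_cardP card_P): (subset_predT P) => /(_ i).
Qed.

Lemma incr_pt_in x : x \in lam -> deg x < 3 -> exists l, incr_pt x l \in lam.
Proof.
move=> x_lam x_deg.
have : x \notin socle lam.
  by apply: contraTN x_deg => /(fsubsetP socle_deg_ge3); rewrite !inE /= -leqNgt => /andP [].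
rewrite !inE x_lam /= negb_forall => /existsP [y]; rewrite negb_imply eq_sym => /andP [xy yx].
have [l xly] := incr_ple xy yx.
by exists l; exact: lam_down (fsvalP y) xly.
Qed.

Lemma leq_k_h2 : h lam 1 = k -> k <= h lam 2.
Proof.
move=> h1; pose N : rel 'I_k := fun i j => pair_pt i j \in lam.
have N_total i : exists j, N i j.
  by have [j] := incr_pt_in (unit_pt_in h1 i) ltac:(by rewrite deg_unit_pt); exists j.
have N_extend i j : N i j -> exists l, N i l && N j l.
  move=> Nij; have [l ijl] := incr_pt_in Nij ltac:(by rewrite deg_pair_pt).
  exists l; rewrite /N (lam_down ijl (ple_pair_incr _ _ _)) /=.
  by apply: lam_down ijl _; rewrite (pair_ptC i j); exact: ple_pair_incr.
have [g [Ng g_2cycle]] := choice_without_2cycles N_total N_extend.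
have f_inj : injective (fun i => pair_pt i (g i)).
  move=> i j /= fij; case: (eqVneq i j) => // ij.
  apply: g_2cycle; first exact: pair_pt_inj fij ij.
  by apply: pair_pt_inj (esym fij) _; rewrite eq_sym.
rewrite -[k in k <= _]card_ord; apply: leq_card_fset_inj f_inj _ => i.
by rewrite !inE /= deg_pair_pt andbT; exact: Ng.
Qed.

End LowDegreeLayers.

Theorem proposition4p2 (k q m : nat) :
  0 < k -> 0 < q -> 0 < m -> q < k ->
  forall lam : {fset pt k}, ~ is_M_partition k q m lam.
Proof.
move=> _ _ _ q_lt_k lam [[_ lam_down] socle_deg_ge3 h1 h2 _].
by have := leq_k_h2 lam_down socle_deg_ge3 h1; rewrite h2 leqNgt q_lt_k.
Qed.
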